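(* Assume $\operatorname{non}(\mathcal N)=\mathfrak c$. Then $\mathcal{ANM}_{\mathfrak c}\setminus\mathcal{ND}_{\mathfrak c}$ is strongly $\mathfrak c$-algebrable in $\left(\mathbb R^{[0,1]}\right)^{\mathfrak c}$.
   Context: For a regular infinite cardinal $\kappa$, a $\kappa$-sequence $(x_\alpha)_{\alpha<\kappa}$ converges to $x$ if for every neighbourhood $U$ of $x$ there is $\alpha_0<\kappa$ with $x_\alpha\in U$ for all $\alpha_0<\alpha<\kappa$; $\left(\mathbb R^{[0,1]}\right)^{\kappa}$ is the commutative real algebra of $\kappa$-sequences of functions $[0,1]\to\mathbb R$ with indexwise addition, multiplication and scalar multiplication. $\lambda$ is Lebesgue measure, $\mathcal N$ the null subsets of $[0,1]$, $\operatorname{non}(\mathcal N)$ the least cardinality of a non-null subset of $[0,1]$. $\mathcal{ANM}_{\kappa}$: $\kappa$-sequences of Lebesgue measurable $f_\alpha:[0,1]\to\mathbb R$ converging a.e. to a measurable $f$ but not converging in measure to $f$. $\mathcal{ND}_{\kappa}$: $\kappa$-sequences of Lebesgue measurable $f_\alpha:[0,1]\to\mathbb R$ dominated a.e. by a common integrable $g$, converging a.e. to an integrable $f$, with $\int|f_\alpha-f|\,d\lambda\not\to0$. $S$ is strongly $\mu$-algebrable if there is a set $X$ of $\mu$ algebraically independent elements such that every nonzero element of the (non-unital) algebra generated by $X$ belongs to $S$. *)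

From HB Require Import structures.
From mathcomp Require Import all_boot all_order all_algebra.
From mathcomp Require Import mpoly.
From mathcomp Require Import all_classical all_reals all_analysis.
Set Implicit Arguments. Unset Strict Implicit. Unset Printing Implicit Defensive.
Import Order.TTheory GRing.Theory Num.Theory numFieldNormedType.Exports.
Local Open Scope classical_set_scope.
Local Open Scope ring_scope.

Section Defs.
Variable R : realType.

(* the measurable type carrying the completed Lebesgue measure (carrier = R):
   its measurable sets are the Lebesgue measurable sets *)
Definition LT : measurableType _ :=
  caratheodory_type (R:=R) ((wlength (R:=R) idfun)^*)%mu.

Definition lam : set LT -> \bar R := @completed_lebesgue_measure R.

(* the domain [0,1]; a function [0,1] -> R is modelled by a function LT -> R
   of which only the values on [0,1] matter *)
Definition D01 : set LT := `[(0:R), 1]%classic.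

Definition lmeas (f : LT -> R) := measurable_fun D01 f.

(* (I, lt) is (order-isomorphic to) the initial ordinal of the continuum c:
   a strict well-order on a set of size c all of whose proper initial
   segments have size < c *)
Definition is_continuum_ordinal (I : Type) (lt : I -> I -> Prop) :=
  [/\ (forall a, ~ lt a a),
      (forall a b c, lt a b -> lt b c -> lt a c),
      (forall a b, [\/ lt a b, a = b | lt b a]) &
      well_founded lt] /\
  (([set: I] #= [set: R])%card /\
   (forall a, ~ ([set: R] #<= [set b | lt b a])%card)).

Definition kconv (I : Type) (lt : I -> I -> Prop) {Y : topologicalType}
  (u : I -> Y) (l : Y) :=
  forall U, nbhs l U -> exists a0, forall a, lt a0 a -> U (u a).

(* non(N) = c : every non-null subset of [0,1] has cardinality >= c
   ([0,1] itself is non-null of cardinality c) *)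
Definition nonN_eq_c :=
  forall A : set LT, A `<=` D01 -> ~ lam.-negligible A ->
    ([set: R] #<= A)%card.

Variables (I : Type) (lt : I -> I -> Prop).

Definition ae_kconv (fs : I -> LT -> R) (f : LT -> R) :=
  {ae lam, forall t, D01 t -> @kconv I lt R (fun a => fs a t) (f t)}.

Definition kconv_in_measure (fs : I -> LT -> R) (f : LT -> R) :=
  forall eps : R, 0 < eps ->
    @kconv I lt (\bar R) (fun a => lam [set t | D01 t /\ eps <= `|fs a t - f t|]) 0%E.

Definition ANM (fs : I -> LT -> R) :=
  exists f : LT -> R,
    [/\ (forall a, lmeas (fs a)), lmeas f, ae_kconv fs f &
        ~ kconv_in_measure fs f].

Definition ND (fs : I -> LT -> R) :=
  exists (g f : LT -> R),
    (forall a, lmeas (fs a)) /\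
    [/\ lam.-integrable D01 (EFin \o g),
        (forall a, {ae lam, forall t, D01 t -> `|fs a t| <= g t}),
        lam.-integrable D01 (EFin \o f),
        ae_kconv fs f &
        ~ @kconv I lt (\bar R) (fun a => (\int[lam]_(t in D01) (`|fs a t - f t|)%:E)%E)
            0%E].

(* evaluation, in the algebra (R^[0,1])^I with indexwise/pointwise
   operations, of a polynomial P in n variables at the elements x_0..x_{n-1} *)
Definition peval (n : nat) (x : 'I_n -> I -> LT -> R)
  (P : mpoly.mpoly n R) : I -> LT -> R :=
  fun a t => mpoly.meval (fun i => x i a t) P.

(* S is strongly c-algebrable in (R^[0,1])^I: a family of c (distinct)
   generators, indexed by R, such that every nonzero polynomial without
   constant term evaluated at distinct generators gives a nonzero element
   (algebraic independence) lying in S *)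
Definition strongly_c_algebrable (S : (I -> LT -> R) -> Prop) :=
  exists gen : R -> I -> LT -> R,
    injective gen /\
    forall (n : nat) (k : 'I_n -> R), injective k ->
    forall P : mpoly.mpoly n R, P != 0 ->
      mpoly.mcoeff (@mpoly.mnm0 n) P = 0 ->
      (exists a t, D01 t /\ peval (fun i => gen (k i)) P a t <> 0) /\
      S (peval (fun i => gen (k i)) P).

End Defs.

(* Fix an injection [idx] of the reals into the index set [I].  Since
   non(N) = c and proper initial segments of [I] have fewer than c elements,
   the points t of [0,1] with [idx t] below a given index form a null set.
   Each generator is a product [alive a t * g_r(floor(1/t))], where t is
   killed (the factor is 0) at every index beyond [idx t]; any nonzero
   polynomial P without constant term in generators therefore converges to 0
   everywhere.  On the block ]1/(j+2), 1/(j+1)], and off a null set at every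
   index, it equals P evaluated at powers of Y = (j+2)^3 whose exponents are
   base-(j+2)^2 numbers with eventually distinct digits: one monomial
   dominates and |P| >= c Y.  Hence no convergence in measure, and an
   integrable dominating function would have integral >= c (j+2) for all j. *)

From mathcomp Require Import all_boot all_order all_algebra.
From mathcomp Require Import mpoly.
From mathcomp Require Import all_classical all_reals all_analysis.
From mathcomp Require Import measurable_realfun.
From mathcomp Require Import ring lra zify.
Set Implicit Arguments. Unset Strict Implicit. Unset Printing Implicit Defensive.
Import Order.TTheory GRing.Theory Num.Theory Num.Def numFieldNormedType.Exports.
Local Open Scope classical_set_scope.
Local Open Scope ring_scope.

Lemma exists_arg_max_seq (T : eqType) (s : seq T) (e : T -> nat) :
  s != [::] -> exists2 x, x \in s & forall y, y \in s -> (e y <= e x)%N.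
Proof.
elim: s => // a [|b s] IH _.
  by exists a => [|y]; rewrite ?mem_seq1 // => /eqP ->.
have [x xs xmax] := IH isT.
have [exa|eax] := leqP (e a) (e x).
  exists x => [|y]; first by rewrite inE xs orbT.
  by rewrite inE => /predU1P[->|/xmax].
exists a => [|y]; first by rewrite inE eqxx.
by rewrite inE => /predU1P[->//|/xmax/leq_trans->//]; rewrite ltnW.
Qed.

Lemma dominant_power_sum (F : realDomainType) (T : eqType) (s : seq T)
    (e : T -> nat) (f : T -> F) (L C Y : F) :
  uniq s -> s != [::] -> {in s &, injective e} -> {in s, forall x, 0 < e x}%N ->
  {in s, forall x, L <= `|f x|} -> \sum_(x <- s) `|f x| <= C ->
  1 <= Y -> 2 * C <= L * Y ->
  L * Y <= 2 * `|\sum_(x <- s) f x * Y ^+ e x|.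
Proof.
move=> us s0 einj epos fL fC Y1 CY.
have [M Ms Mmax] := exists_arg_max_seq e s0.
have C0 : 0 <= C by apply: le_trans fC; rewrite sumr_ge0.
have Y0 : 0 <= Y by lra.
rewrite (bigD1_seq M) //=.
move: (epos M Ms); case eM: (e M) => [//|k] _.
have rest : `|\sum_(x <- s | x != M) f x * Y ^+ e x| <= C * Y ^+ k.
  apply: le_trans (ler_norm_sum _ _ _) _.
  apply: (@le_trans _ _ (\sum_(x <- s | x != M) `|f x| * Y ^+ k)).
    rewrite big_seq_cond [X in _ <= X]big_seq_cond.
    apply: ler_sum => x /andP[xs xM].
    rewrite normrM [`|Y ^+ _|]ger0_norm ?exprn_ge0 //.
    apply: ler_wpM2l => //; apply: (ler_weXn2l Y1).
    have := Mmax x xs; rewrite eM leq_eqVlt ltnS => /orP[/eqP exM|//].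
    by case/eqP: xM; apply: einj => //; rewrite exM eM.
  rewrite -mulr_suml ler_wpM2r ?exprn_ge0 //; apply: le_trans fC.
  by rewrite [X in _ <= X](bigD1_seq M) //= lerDr.
have Yk : 1 <= Y ^+ k by apply: exprn_ege1.
have top : Y ^+ k * (L * Y) <= `|f M * Y ^+ k.+1|.
  rewrite normrM exprSr [`|_ * Y|]ger0_norm ?mulr_ge0 ?exprn_ge0 //.
  by rewrite mulrCA ler_wpM2r ?mulr_ge0 ?exprn_ge0 // fL.
have := lerB_normD (f M * Y ^+ k.+1) (\sum_(x <- s | x != M) f x * Y ^+ e x).
nra.
Qed.

Lemma base_expansion_inj n (B D : nat) (p : 'I_n -> nat) (m m' : 'I_n -> nat) :
  injective p -> (forall i, m i < D)%N -> (forall i, m' i < D)%N ->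
  (2 * n * D <= B)%N ->
  (\sum_i m i * B ^ p i = \sum_i m' i * B ^ p i)%N -> m =1 m'.
Proof.
move=> pinj mD m'D nDB E i0; apply/eqP/negPn/negP => ne.
pose s := [seq i <- enum 'I_n | m i != m' i].
pose f i : int := (m i)%:Z - (m' i)%:Z.
have B1 : (1 <= B)%N.
  apply: leq_trans nDB; rewrite !muln_gt0.
  by rewrite (leq_ltn_trans _ (ltn_ord i0)) // (leq_ltn_trans _ (mD i0)).
(* The exponents are shifted by one, as [dominant_power_sum] needs them
   positive. *)
have sum0 : \sum_(i <- s) f i * B%:Z ^+ (p i).+1 = 0.
  rewrite big_filter big_mkcond big_enum /=.
  transitivity (B%:Z * \sum_i ((m i * B ^ p i)%N%:R - (m' i * B ^ p i)%N%:R)).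
    rewrite mulr_sumr; apply: eq_bigr => i _.
    case: ifPn => [_|/negPn/eqP mi]; last by rewrite mi subrr mulr0.
    by rewrite /f !natrM !natrX !natz exprS mulrBr mulrBl !mulrA ![_ * B%:Z]mulrC.
  by rewrite sumrB -!natr_sum E subrr mulr0.
suff : B%:Z <= 0 by rewrite lez_nat leqNgt B1.
rewrite -(mul1r B%:Z) -(mulr0 2) -(normr0 int) -sum0.
apply: (dominant_power_sum (C := (n * D)%:Z)) => //.
- exact/filter_uniq/enum_uniq.
- apply/eqP => s0; suff : i0 \in s by rewrite s0.
  by rewrite mem_filter ne mem_enum.
- by move=> x y _ _ [/pinj].
- by move=> x; rewrite mem_filter /f => /andP[/eqP mx _]; lia.
- rewrite big_filter big_mkcond big_enum /=.
  apply: (@le_trans _ _ (\sum_(i : 'I_n) D%:Z)).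
    apply: ler_sum => i _; case: ifP => _ //.
    by have := mD i; have := m'D i; rewrite /f; lia.
  by rewrite sumr_const card_ord -mulr_natr natz; lia.
- by rewrite mul1r; lia.
Qed.

Lemma exists_pos_lbound_norm (F : realDomainType) (T : eqType) (s : seq T)
    (f : T -> F) :
  {in s, forall x, f x != 0} -> exists2 L : F, 0 < L & {in s, forall x, L <= `|f x|}.
Proof.
elim: s => [|a s IH] fs0; first by exists 1.
have [L L0 HL] : exists2 L : F, 0 < L & {in s, forall x, L <= `|f x|}.
  by apply: IH => x xs; apply: fs0; rewrite inE xs orbT.
exists (Order.min L `|f a|) => [|x]; first by rewrite lt_min L0 normr_gt0 fs0 ?mem_head.
by rewrite inE ge_min => /predU1P[->|/HL->//]; rewrite lexx orbT.
Qed.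

Lemma mnm_neq0_coord n (m : 'X_{1..n}) : m != 0%MM -> exists i, m i != 0%N.
Proof. by rewrite -mdeg_eq0 mdegE sum_nat_eq0 => /forallPn[i]; exists i. Qed.

Lemma meval_origin (F : comNzRingType) n (P : {mpoly F[n]}) :
  meval (fun=> 0) P = P@_0.
Proof.
rewrite mevalE (eq_bigr (fun m => if m == 0%MM then P@_m else 0)) => [|m _].
  have [P0|P0] := boolP (0%MM \in msupp P).
    by rewrite (bigD1_seq 0%MM) ?msupp_uniq //= eqxx big1 ?addr0 // => m /negbTE->.
  rewrite big_seq big1 => [|m mP]; last by case: eqP mP => // ->; rewrite (negbTE P0).
  by move: P0; rewrite mcoeff_msupp negbK => /eqP->.
have [->|/mnm_neq0_coord[i mi]] := eqVneq m 0%MM.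
  by rewrite big1 ?mulr1 // => i _; rewrite mnm0E expr0.
by rewrite (bigD1 i) //= expr0n (negbTE mi) mul0r mulr0.
Qed.

Definition wdeg n (Ex : 'I_n -> nat) (m : 'X_{1..n}) : nat := (\sum_i m i * Ex i)%N.

Lemma meval_powers (F : comNzRingType) n (P : {mpoly F[n]}) (Ex : 'I_n -> nat) (y : F) :
  meval (fun i => y ^+ Ex i) P = \sum_(m <- msupp P) P@_m * y ^+ wdeg Ex m.
Proof.
rewrite mevalE; apply: eq_bigr => m _; congr (_ * _).
by rewrite /wdeg -prodrXr; apply: eq_bigr => i _; rewrite -exprM mulnC.
Qed.

Lemma meval_powers_growth (F : realDomainType) n (P : {mpoly F[n]})
    (Ex : 'I_n -> nat) (y L C : F) :
  P != 0 -> P@_0 = 0 ->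
  {in msupp P &, injective (wdeg Ex)} -> (forall i, 0 < Ex i)%N ->
  {in msupp P, forall m, L <= `|P@_m|} -> \sum_(m <- msupp P) `|P@_m| <= C ->
  1 <= y -> 2 * C <= L * y ->
  L * y <= 2 * `|meval (fun i => y ^+ Ex i) P|.
Proof.
move=> P0 Pc inj Epos HL HC y1 Cy; rewrite meval_powers.
apply: (dominant_power_sum (C := C)) => //; first by rewrite msupp_eq0.
move=> m mP; have m0 : m != 0%MM.
  by apply: contraTneq mP => ->; rewrite mcoeff_msupp Pc eqxx.
rewrite (leq_trans _ (_ : mdeg m <= wdeg Ex m)%N) ?lt0n ?mdeg_eq0 //.
by rewrite mdegE leq_sum // => i _; rewrite leq_pmulr.
Qed.

Lemma truncn_neq (F : archiRealDomainType) (x y : F) :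
  0 <= x -> 0 <= y -> 1 <= `|x - y| -> truncn x != truncn y.
Proof.
have lt_trunc (u v : F) : 0 <= u -> u + 1 <= v -> (truncn u < truncn v)%N.
  move=> u0 uv; have v0 : 0 <= v by apply: le_trans uv; rewrite addr_ge0.
  by rewrite truncn_ge_nat // -natr1 (le_trans _ uv) // lerD2r truncn_le.
move=> x0 y0; rewrite neq_ltn; have [xy|yx] := lerP x y => h.
  by rewrite lt_trunc //; lra.
by rewrite (lt_trunc y x) ?orbT //; lra.
Qed.

Section GeneratorValues.
Context {R : realType}.

(* Cubes, so that [height j.+1] times the length [1/(j+1) - 1/(j+2)] of the
   [j]-th block below is unbounded. *)
Definition height (j : nat) : R := (j.+1 ^ 3)%:R.

Definition digit (j : nat) (r : R) : nat := truncn (j%:R * expR r).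

(* In base [(j+1)^2] the exponent has a single digit 1, in position
   [digit j r]; a monomial [m] in generators [k i] thus gets the exponent with
   digit [m i] in position [digit j (k i)]. *)
Definition gen_value (r : R) (j : nat) : R := height j ^+ ((j.+1 ^ 2) ^ digit j r)%N.

Lemma digit_neq (r r' : R) : r != r' -> \forall j \near \oo, digit j r != digit j r'.
Proof.
move=> rr'; set de := `|expR r - expR r'|.
have de0 : 0 < de.
  by rewrite normr_gt0 subr_eq0; apply: contra rr' => /eqP/expR_inj->.
exists (truncn de^-1).+1 => // j /= jde; apply: truncn_neq; rewrite ?mulr_ge0 ?expR_ge0 //.
rewrite -mulrBr normrM ger0_norm // -ler_pdivrMr // div1r ltW //.
by apply: lt_le_trans (truncnS_gt _) _; rewrite ler_nat.
Qed.

Lemma digit_inj n (k : 'I_n -> R) : injective k ->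
  \forall j \near \oo, injective (fun i => digit j (k i)).
Proof.
move=> kinj; have : \forall j \near \oo, forall p : 'I_n * 'I_n,
    p.1 != p.2 -> digit j (k p.1) != digit j (k p.2).
  apply: filter_forall => -[i i']; have [<-|ii'] := eqVneq i i'.
    by apply: nearW => j; rewrite eqxx.
  have kii' : k i != k i' by rewrite (inj_eq kinj).
  by move: (digit_neq kii'); apply: filterS => j + _.
apply: filterS => j dneq i i' /eqP dii'.
by apply/eqP; apply: contraLR dii' => /(dneq (i, i')).
Qed.

Lemma gen_value_growth n (k : 'I_n -> R) (P : {mpoly R[n]}) :
  injective k -> P != 0 -> P@_0 = 0 ->
  exists2 c : R, 0 < c &
    \forall j \near \oo, c * height j <= `|meval (fun i => gen_value (k i) j) P|.
Proof.
move=> kinj P0 Pc.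
have [L L0 HL] : exists2 L : R, 0 < L & {in msupp P, forall m, L <= `|P@_m|}.
  by apply: exists_pos_lbound_norm => m; rewrite mcoeff_msupp.
set C := \sum_(m <- msupp P) `|P@_m|.
have msize_gt (m : 'X_{1..n}) i : m \in msupp P -> (m i < msize P)%N.
  move=> /msize_mdeg_lt; apply: leq_ltn_trans.
  by rewrite mdegE (bigD1 i) //= leq_addr.
exists (L / 2); first by rewrite divr_gt0.
near=> j; rewrite mulrAC ler_pdivrMr // [X in _ <= X]mulrC.
apply: (meval_powers_growth (C := C)) => //.
- move=> m m' mP m'P /= E; apply/mnmP.
  apply: (base_expansion_inj (D := msize P) _ _ _ _ E).
  + by near: j; exact: digit_inj.
  + by move=> i; exact: msize_gt.
  + by move=> i; exact: msize_gt.
  + by near: j; exists (2 * n * msize P)%N => // j /= hj; rewrite expnS expn1; nia.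
- by move=> i; rewrite expn_gt0.
- by rewrite /height (ler_nat _ 1) expn_gt0.
- near: j; exists (truncn (2 * C / L)).+1 => // j /= hj.
  rewrite -ler_pdivrMl // mulrC (le_trans (ltW (truncnS_gt _))) //.
  rewrite /height ler_nat (leq_trans hj) // expnS (leq_trans (leqnSn j)) //.
  by rewrite leq_pmulr ?expn_gt0.
Unshelve. all: by end_near.
Qed.

Lemma height_block_length j :
  j.+2%:R <= height j.+1 * ((j.+1%:R)^-1 - (j.+2%:R)^-1).
Proof.
rewrite /height natrX -[j.+2]addn1 natrD; set x : R := j.+1%:R.
have x1 : 1 <= x by rewrite (ler_nat _ 1).
rewrite (_ : _ * _ = (x + 1) * ((x + 1) / x)); last first.
  by field; apply/andP; split; apply/negP => /eqP; lra.
have : 1 <= (x + 1) / x by rewrite ler_pdivlMr ?mul1r ?lerDl //; lra.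
set y := (x + 1) / x; nra.
Qed.

End GeneratorValues.

Section LebesgueBlocks.
Context {R : realType}.
Local Notation LT := (@LT R).
Local Notation lam := (@lam R).
Local Notation D01 := (@D01 R).

Lemma measurable_LT_borel (A : set R) :
  measurable (A : set (measurableTypeR R)) -> measurable (A : set LT).
Proof. exact: sub_caratheodory. Qed.

Lemma lam_lebesgue (A : set R) :
  lam A = lebesgue_measure (A : set (measurableTypeR R)).
Proof. by []. Qed.

Lemma measurable_negligible (A : set LT) : lam.-negligible A -> measurable A.
Proof. exact: completed_lebesgue_measure_is_complete. Qed.

(* [lam] is an outer measure, so it is monotone and subadditive on all sets. *)
Lemma le_lam_negligible (A B N : set LT) :
  A `<=` B `|` N -> lam.-negligible N -> (lam A <= lam B)%E.
Proof.
move=> ABN nN; have N0 : lam N = 0%E.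
  by apply/measure_negligible => //; exact: measurable_negligible.
pose mu := ((wlength (R:=R) idfun)^*)%mu.
apply: (@le_trans _ _ (mu (B `|` N))); first exact: (le_outer_measure mu _ _ ABN).
by apply: le_trans (outer_measureU2 mu _ _) _; rewrite [X in (_ + X)%E]N0 adde0.
Qed.

Lemma measurable_D01 : measurable D01.
Proof. by apply: measurable_LT_borel; exact: measurable_itv. Qed.

Definition block (j : nat) : set R := `](j.+2%:R)^-1, (j.+1%:R)^-1]%classic.

Definition block_index (t : R) : nat := truncn t^-1.

Lemma block_indexP (t : R) j : block_index t = j.+1 <-> block j t.
Proof.
rewrite /block /= in_itv /=; split => [tj|/andP[tj1 tj2]].
  have t1 : 1 <= t^-1 by rewrite -truncn_gt0 -/(block_index t) tj.
  have t0 : 0 < t by rewrite -invr_gt0 (lt_le_trans ltr01).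
  have := truncn_itv (le_trans ler01 t1); rewrite -/(block_index t) tj.
  move=> /andP[jt1 jt2]; apply/andP; split.
    by rewrite -[t]invrK ltf_pV2 ?posrE ?invr_gt0 ?ltr0Sn.
  by rewrite -[t]invrK lef_pV2 ?posrE ?invr_gt0 ?ltr0Sn.
have t0 : 0 < t by apply: lt_trans tj1; rewrite invr_gt0 ltr0Sn.
apply: truncn_def; apply/andP; split.
  by rewrite -(invrK j.+1%:R) lef_pV2 ?posrE ?invr_gt0 ?ltr0Sn.
by rewrite -(invrK j.+2%:R) ltf_pV2 ?posrE ?invr_gt0 ?ltr0Sn.
Qed.

Lemma measurable_block j : measurable (block j : set LT).
Proof. by apply: measurable_LT_borel; exact: measurable_itv. Qed.

Lemma measurable_block_index_eq j : measurable ([set t | block_index t = j] : set LT).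
Proof.
have blockE i : [set t | block_index t = i.+1] = (block i : set LT).
  by apply/seteqP; split => t /block_indexP.
case: j => [|j]; last by rewrite blockE; exact: measurable_block.
rewrite (_ : [set t | _] = ~` \bigcup_i [set t | block_index t = i.+1]).
  by apply/measurableC/bigcupT_measurable => i; rewrite blockE; exact: measurable_block.
apply/seteqP; split => t /=; first by move=> t0 [i _ /=]; rewrite t0.
move=> nt; case E: (block_index t) => [//|i]; case: nt; exists i => //=.
Qed.

Lemma measurable_fun_block_index (G : nat -> R) (D : set LT) :
  measurable_fun D (fun t => G (block_index t)).
Proof.
move=> mD; apply: (measurable_funS measurableT) => //.
rewrite (_ : setT = \bigcup_j [set t | block_index t = j]); last first.
  by apply/seteqP; split => // t _; exists (block_index t).
apply/measurable_fun_bigcup => [j|j]; first exact: measurable_block_index_eq.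
apply: (eq_measurable_fun (cst (G j))); last exact: measurable_cst.
by move=> t; rewrite inE /= => ->.
Qed.

Lemma block_sub01 j : (block j : set LT) `<=` D01.
Proof.
move=> t; rewrite /block /D01 /= !in_itv /= => /andP[tj1 tj2].
rewrite (le_trans _ (ltW tj1)) ?invr_ge0 //= (le_trans tj2) //.
by rewrite invf_le1 ?ltr0Sn // (ler_nat _ 1).
Qed.

Lemma block_inv_succ j : block j (j.+1%:R)^-1.
Proof. by rewrite /block /= in_itv /= lexx andbT ltf_pV2 ?posrE ?ltr0Sn // ltr_nat. Qed.

Lemma lam_block j : lam (block j) = ((j.+1%:R)^-1 - (j.+2%:R)^-1)%:E.
Proof.
rewrite lam_lebesgue lebesgue_measure_itv /= lte_fin ltf_pV2 ?posrE ?ltr0Sn //.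
by rewrite ltr_nat ltnSn -EFinD.
Qed.

End LebesgueBlocks.

Section Generators.
Variables (R : realType) (I : Type) (ltI : I -> I -> Prop) (idx : R -> I).
Local Notation LT := (@LT R).
Local Notation lam := (@lam R).
Local Notation D01 := (@D01 R).

Hypothesis ltI_irr : forall a, ~ ltI a a.
Hypothesis null_segment : forall a, lam.-negligible (D01 `&` [set t | ltI (idx t) a]).
Hypothesis no_greatest : forall a, exists b, ltI a b.

Definition alive (a : I) (t : LT) : R := if `[< ltI (idx t) a >] then 0 else 1.

Definition gen (r : R) : I -> LT -> R :=
  fun a t => alive a t * gen_value r (block_index t).

Lemma peval_gen n (k : 'I_n -> R) (P : {mpoly R[n]}) a t : P@_0 = 0 ->
  peval (fun i => gen (k i)) P a t =
  alive a t * meval (fun i => gen_value (k i) (block_index t)) P.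
Proof.
move=> Pc; rewrite /peval /gen /alive; case: asboolP => _.
  by rewrite mul0r -[RHS]Pc -meval_origin; apply: meval_eq => i; rewrite mul0r.
by rewrite mul1r; apply: meval_eq => i; rewrite mul1r.
Qed.

Lemma measurable_alive a : measurable_fun D01 (alive a).
Proof.
have mS := measurable_negligible (null_segment a).
apply: (eq_measurable_fun (\1_(~` (D01 `&` [set t | ltI (idx t) a])) : LT -> R)).
  move=> t; rewrite inE /alive indicE => Dt; case: asboolP => ta.
    by rewrite memNset //= => /(_ (conj Dt ta)).
  by rewrite mem_set // => -[].
exact/measurable_indic/measurableC.
Qed.

Lemma lmeas_peval_gen n (k : 'I_n -> R) (P : {mpoly R[n]}) a : P@_0 = 0 ->
  lmeas (peval (fun i => gen (k i)) P a).
Proof.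
move=> Pc; rewrite /lmeas; pose Q j := meval (fun i => gen_value (k i) j) P.
rewrite (_ : peval _ P a = alive a \* (fun t => Q (block_index t))); last first.
  by apply/funext => t; rewrite peval_gen.
apply: measurable_funM; first exact: measurable_alive.
exact: measurable_fun_block_index.
Qed.

Section Element.
Variables (n : nat) (k : 'I_n -> R) (P : {mpoly R[n]}) (c : R) (j1 : nat).
Hypotheses (Pc : P@_0 = 0) (c0 : 0 < c).
Hypothesis P_large : forall j, (j1 <= j)%N ->
  c * height j <= `|meval (fun i => gen_value (k i) j) P|.

Local Notation fs := (peval (fun i => gen (k i)) P).

Lemma peval_gen_dead a t : ltI (idx t) a -> fs a t = 0.
Proof. by move=> ta; rewrite peval_gen // /alive; case: asboolP => // _; rewrite mul0r. Qed.

Lemma peval_gen_large a j t : (j1 <= j)%N -> block j t -> ~ ltI (idx t) a ->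
  c * height j.+1 <= `|fs a t|.
Proof.
move=> jj1 /block_indexP jt ta; rewrite peval_gen // /alive.
by case: asboolP => // _; rewrite mul1r jt P_large // leqW.
Qed.

Lemma lam_block_le_large a j : (j1 <= j)%N ->
  (lam (block j) <= lam [set t | D01 t /\ (c * height j.+1 <= `|fs a t|)%R])%E.
Proof.
move=> jj1; apply: (le_lam_negligible _ (null_segment a)) => t jt.
have Dt := block_sub01 jt.
have [ta|ta] := pselect (ltI (idx t) a); [right | left]; split => //.
exact: peval_gen_large.
Qed.

Lemma peval_gen_neq0 : exists a t, D01 t /\ fs a t <> 0.
Proof.
set t := (j1.+1%:R)^-1 : R; exists (idx t), t; split.
  exact/block_sub01/block_inv_succ.
move=> fs0; have := peval_gen_large (leqnn j1) (block_inv_succ j1) (@ltI_irr (idx t)).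
by rewrite fs0 normr0 leNgt mulr_gt0 // ltr0n expn_gt0.
Qed.

Lemma peval_gen_ANM : ANM ltI fs.
Proof.
exists (fun=> 0); split.
- by move=> a; exact: lmeas_peval_gen.
- exact: measurable_cst.
- apply: aeW => t Dt U /nbhs_singleton U0; exists (idx t) => a ta.
  by rewrite peval_gen_dead.
set eps := c * height j1.+1; set l := (j1.+1%:R)^-1 - (j1.+2%:R)^-1 : R.
have eps0 : 0 < eps by rewrite mulr_gt0 // ltr0n expn_gt0.
have l0 : 0 < l by rewrite subr_gt0 ltf_pV2 ?posrE ?ltr0Sn // ltr_nat.
move=> /(_ eps eps0 _ (@nbhs_open_ereal_lt R 0 (fun=> l) l0)) [a0 small].
have [a a0a] := no_greatest a0; have := small a a0a; apply/negP; rewrite -leNgt /=.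
have -> : [set t | D01 t /\ eps <= `|fs a t - 0|] = [set t | D01 t /\ eps <= `|fs a t|].
  by apply/seteqP; split => t /=; rewrite subr0.
by rewrite -lam_block lam_block_le_large.
Qed.

Lemma dominated_integral_ge a (g : LT -> R) j : (j1 <= j)%N ->
  measurable_fun D01 (EFin \o g) ->
  {ae lam, forall t, D01 t -> `|fs a t| <= g t} ->
  ((c * j.+2%:R)%:E <= \int[lam]_(t in D01) `|(EFin \o g) t|)%E.
Proof.
move=> jj1 mg dom; set A := c * height j.+1.
have A0 : 0 < A by rewrite mulr_gt0 // ltr0n expn_gt0.
apply: le_trans (le_integral_abse lam measurable_D01 mg A0).
have : (lam (block j) <= lam (D01 `&` [set t | A%:E <= `|(EFin \o g) t|]))%E.
  apply: le_trans (lam_block_le_large a jj1) _.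
  apply: (le_lam_negligible (N := ~` [set t | D01 t -> `|fs a t| <= g t])) dom.
  move=> t [Dt At]; have [d|nd] := pselect (D01 t -> `|fs a t| <= g t); last by right.
  left; split => //=; rewrite lee_fin (le_trans At) //.
  exact: le_trans (d Dt) (ler_norm _).
rewrite lam_block => /(lee_wpmul2l (ltW A0 : (0 <= A%:E)%E)); apply: le_trans.
rewrite -EFinM lee_fin /A -mulrA; by rewrite ler_pM2l // height_block_length.
Qed.

Lemma peval_gen_not_ND : ~ ND ltI fs.
Proof.
move=> [g [f [_ [/integrableP[mg gfin] dom _ _ _]]]].
set G := (\int[lam]_(x in D01) _)%E in gfin.
have G0 : (0 <= G)%E by apply: integral_ge0 => t _; exact: abse_ge0.
have := dominated_integral_ge (leq_maxl j1 (truncn (fine G / c))) mg (dom (idx 0)).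
have Gfin : G \is a fin_num by rewrite ge0_fin_numE.
rewrite -/G -[X in (_ <= X)%E](fineK Gfin) lee_fin; apply/negP; rewrite -ltNge.
rewrite -ltr_pdivrMl // mulrC (lt_le_trans (truncnS_gt _)) // ler_nat.
by rewrite ltnS (leq_trans (leq_maxr j1 _)).
Qed.

End Element.

Lemma gen_independent n (k : 'I_n -> R) : injective k ->
  forall P : {mpoly R[n]}, P != 0 -> P@_0 = 0 ->
  let fs := peval (fun i => gen (k i)) P in
  (exists a t, D01 t /\ fs a t <> 0) /\ ANM ltI fs /\ ~ ND ltI fs.
Proof.
move=> kinj P P0 Pc; have [c c0 [j1 _ large]] := gen_value_growth kinj P0 Pc.
split; first exact: peval_gen_neq0 Pc c0 large.
by split; [exact: peval_gen_ANM Pc c0 large | exact: peval_gen_not_ND Pc c0 large].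
Qed.

End Generators.

Lemma card_leT_inj (T U : Type) :
  ([set: T] #<= [set: U])%card -> exists f : T -> U, injective f.
Proof.
move=> /card_leP[f]; exists (fun t => val (f (to_setT t))) => t t' /val_inj ftt'.
by have := congr1 val (injT ftt').
Qed.

Lemma independent_inj (R : realType) (I : Type) (gen : R -> I -> LT R -> R) :
  (forall n (k : 'I_n -> R), injective k ->
     forall P : {mpoly R[n]}, P != 0 -> P@_0 = 0 ->
     exists a t, D01 t /\ peval (fun i => gen (k i)) P a t <> 0) ->
  injective gen.
Proof.
move=> indep r r' grr'; apply: contrapT => rr'.
pose k (i : 'I_2) := if i == ord0 then r else r'.
have kinj : injective k.
  move=> i i'; rewrite /k.
  case: (eqVneq i ord0) => [->|i0]; case: (eqVneq i' ord0) => [->|i'0] //.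
    by move=> /esym.
  move=> _; apply/val_inj; move: (ltn_ord i) (ltn_ord i') i0 i'0; rewrite -!val_eqE /=; lia.
pose P : {mpoly R[2]} := 'X_ord0 - 'X_ord_max.
have P0 : P != 0.
  apply/eqP => /(congr1 (mcoeff U_(ord0))).
  by rewrite mcoeffB !mcoeffXU mcoeff0 subr0 => /eqP; rewrite oner_eq0.
have Pc : P@_0 = 0 by rewrite mcoeffB !mcoeffX !mnm1_eq0 subrr.
have [a [t [_]]] := indep 2 k kinj P P0 Pc; apply.
by rewrite /peval mevalB !mevalXU /k /= grr' subrr.
Qed.

Section ContinuumIndex.
Variables (R : realType) (I : Type) (ltI : I -> I -> Prop) (idx : R -> I).
Hypothesis idx_inj : injective idx.
Local Notation lam := (@lam R).
Local Notation D01 := (@D01 R).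

Lemma null_initial_segment a :
  @nonN_eq_c R -> ~ ([set: R] #<= [set b | ltI b a])%card ->
  lam.-negligible (D01 `&` [set t | ltI (idx t) a]).
Proof.
move=> nonN small; apply: contrapT => /(nonN _ (@subIsetl _ _ _)) cardS.
apply: small; apply: (card_le_trans cardS).
apply: (@card_le_trans _ _ _ (idx @` (D01 `&` [set t | ltI (idx t) a]))).
  by rewrite -(card_le_eql (inj_card_eq (fun x y _ _ => @idx_inj x y))).
by apply: subset_card_le => _ [t [_ ta] <-].
Qed.

Lemma no_greatest_index :
  (forall a b, [\/ ltI a b, a = b | ltI b a]) ->
  (forall a, lam.-negligible (D01 `&` [set t | ltI (idx t) a])) ->
  forall a, exists b, ltI a b.
Proof.
move=> total null a; apply: contrapT => top.
have [t0 fiber] : exists t0 : R, [set t | idx t = a] `<=` [set t0].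
  have [[t0 <-]|none] := pselect (exists t, idx t = a).
    by exists t0 => t /idx_inj.
  by exists 0 => t ta; case: none; exists t.
suff : lam D01 = 0%E.
  rewrite lam_lebesgue lebesgue_measure_itv /= lte_fin ltr01 oppr0 adde0.
  by move=> /eqP; rewrite onee_eq0.
apply/measure_negligible; first exact: measurable_D01.
apply: (negligibleS (A := (D01 `&` [set t | ltI (idx t) a]) `|` [set t0])).
  move=> t Dt; case: (total (idx t) a) => [ta|/fiber|ta]; [by left|by right|].
  by case: top; exists (idx t).
apply: negligibleU => //; apply/negligibleP.
  by apply: measurable_LT_borel; exact: measurable_set1.
exact: lebesgue_measure_set1.
Qed.

End ContinuumIndex.

Unset Implicit Arguments.
Theorem mainTheorem11 (R : realType) (I : Type) (lt : I -> I -> Prop) :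
  @is_continuum_ordinal R I lt ->
  @nonN_eq_c R ->
  @strongly_c_algebrable R I
    (fun fs => @ANM R I lt fs /\ ~ @ND R I lt fs).
Proof.
move=> [[irr _ total _] [cardI small]] nonN.
have [idx idx_inj] : exists idx : R -> I, injective idx.
  by apply: card_leT_inj; move: cardI; rewrite card_eq_le => /andP[].
have null a := null_initial_segment idx_inj nonN (small a).
have no_top := no_greatest_index idx_inj total null.
have indep := gen_independent irr null no_top.
exists (gen lt idx); split => [|n k kinj P P0 Pc]; last by case: (indep n k kinj P P0 Pc).
by apply: independent_inj => n k kinj P P0 Pc; case: (indep n k kinj P P0 Pc).
Qed.
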